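(* Let $u=(p,q)$ and $v=(r,s)$ be primitive vectors in $\mathbb{Z}^2$ with $\det(u,v)=ps-qr=n\ge 2$, let $d_\pm=\gcd(u\pm v)$ (the gcd of the coordinates of $u\pm v$), and let $a$ be the unique integer with $0\le a<n$ such that $Mu=(1,0)$ and $Mv=(a,n)$ for some $M\in\mathrm{SL}_2(\mathbb{Z})$. Then the following are equivalent: (i) $\max\{d_+,d_-\}=n$ and $\min\{d_+,d_-\}\in\{1,2\}$; (ii) $a\equiv\pm1\pmod n$; (iii) $u\equiv\pm v\pmod n$ (componentwise congruence). In this case the non-maximal thread degree $\min\{d_+,d_-\}$ equals $\gcd(n,2)$; in particular it equals $1$ if $n$ is odd and $2$ if $n$ is even.
   Context: A vector $(x,y)\in\mathbb{Z}^2$ is primitive if $\gcd(x,y)=1$. For such $u,v$ with $\det(u,v)=n\ge2$ there is $M\in\mathrm{SL}_2(\mathbb{Z})$ with $Mu=(1,0)$, $Mv=(a,n)$, $0\le a<n$, $\gcd(a,n)=1$, and $a$ is determined uniquely by these conditions. *)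

From HB Require Import structures.
From mathcomp Require Import all_boot all_order all_algebra.
Set Implicit Arguments. Unset Strict Implicit. Unset Printing Implicit Defensive.
Import Order.TTheory GRing.Theory Num.Theory.
Local Open Scope ring_scope.

Definition vec2 (x y : int) : 'cV[int]_2 :=
  \col_(i < 2) (if i == ord0 then x else y).

Definition vgcd (x y : int) : int := gcdz x y.

Definition primitive (x y : int) : Prop := gcdz x y = 1.

Definition det2 (p q r s : int) : int := p * s - q * r.

Definition inSL2 (M : 'M[int]_2) : Prop := \det M = 1.

From HB Require Import structures.
From mathcomp Require Import all_boot all_order all_algebra.
From mathcomp Require Import ring.
Set Implicit Arguments. Unset Strict Implicit. Unset Printing Implicit Defensive.
Import Order.TTheory GRing.Theory Num.Theory.
Local Open Scope ring_scope.

(* M is unimodular, so it preserves both the gcd of the coordinates of an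
   integer vector and divisibility of all its coordinates by n.  Applied to
   u ± v this gives d+ = gcd(1 + a, n), d- = gcd(1 - a, n), and u = ±v (mod n)
   iff (1, 0) = ±(a, n) (mod n), i.e. a = ±1 (mod n).  If n | 1 - a then
   d- = n and, as (1 + a) + (1 - a) = 2, d+ = gcd(2, n) <= n; symmetrically for
   n | 1 + a. *)

Definition dvdmx (d : int) {m n} (A : 'M[int]_(m, n)) : bool :=
  [forall i, forall j, (d %| A i j)%Z].

Lemma dvdmx_mull d m n k (A : 'M[int]_(m, n)) (B : 'M[int]_(n, k)) :
  dvdmx d B -> dvdmx d (A *m B).
Proof.
move=> /forallP dB; apply/forallP => i; apply/forallP => j.
rewrite mxE rpred_sum // => l _; rewrite dvdz_mull //.
exact: (forallP (dB l)).
Qed.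

Lemma dvdmx_unitmx d n k (M : 'M[int]_n) (B : 'M[int]_(n, k)) :
  M \in unitmx -> dvdmx d (M *m B) = dvdmx d B.
Proof.
move=> M_unit; apply/idP/idP; last exact: dvdmx_mull.
by rewrite -{2}[B]mul1mx -(mulVmx M_unit) -mulmxA; apply: dvdmx_mull.
Qed.

Lemma dvdmx_vec2 d x y : dvdmx d (vec2 x y) = (d %| x)%Z && (d %| y)%Z.
Proof.
apply/forallP/andP => [dv | [dx dy] i].
  by split; [have /forallP := dv 0 | have /forallP := dv 1] => /(_ 0); rewrite mxE.
by apply/forallP => j; rewrite mxE; case: ifP.
Qed.

Lemma vec2D x y x' y' : vec2 (x + x') (y + y') = vec2 x y + vec2 x' y'.
Proof. by apply/matrixP => i j; rewrite !mxE; case: ifP. Qed.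

Lemma vec2B x y x' y' : vec2 (x - x') (y - y') = vec2 x y - vec2 x' y'.
Proof. by apply/matrixP => i j; rewrite !mxE; case: ifP. Qed.

Lemma dvdz_vec2_unitmx (M : 'M[int]_2) x y X Y d :
  M \in unitmx -> M *m vec2 x y = vec2 X Y ->
  (d %| x)%Z && (d %| y)%Z = (d %| X)%Z && (d %| Y)%Z.
Proof.
by move=> M_unit MxX; rewrite -dvdmx_vec2 -(dvdmx_unitmx _ _ M_unit) MxX dvdmx_vec2.
Qed.

Lemma gcdz_eq_dvd x y X Y :
  (forall d, (d %| x)%Z && (d %| y)%Z = (d %| X)%Z && (d %| Y)%Z) ->
  gcdz x y = gcdz X Y.
Proof.
move=> eq_dvd.
have le_xX : (gcdz x y %| gcdz X Y)%Z by rewrite dvdz_gcd -eq_dvd dvdz_gcdl dvdz_gcdr.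
have le_Xx : (gcdz X Y %| gcdz x y)%Z by rewrite dvdz_gcd eq_dvd dvdz_gcdl dvdz_gcdr.
move: le_xX le_Xx; rewrite /gcdz !dvdzE /= => le_xX le_Xx.
by congr Posz; apply/eqP; rewrite eqn_dvd le_xX le_Xx.
Qed.

Lemma gcdz_unitmx (M : 'M[int]_2) x y X Y :
  M \in unitmx -> M *m vec2 x y = vec2 X Y -> gcdz x y = gcdz X Y.
Proof. by move=> M_unit MxX; apply: gcdz_eq_dvd => d; apply: dvdz_vec2_unitmx MxX. Qed.

Lemma gcdz_dvdDl n x y : (n %| y)%Z -> gcdz (y + x) n = gcdz x n.
Proof. by case/dvdzP => k ->; rewrite gcdzC gcdzMDl gcdzC. Qed.

Lemma gcdz2 n : gcdz n 2 = if (2 %| n)%Z then 2 else 1.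
Proof.
case: ifP => [/gcdz_idPr // | odd_n]; apply/eqP.
by rewrite -/(coprimez n 2) coprimez_sym coprimezE prime_coprime // -dvdzE odd_n.
Qed.

Section GcdWithModulus.

Variable n : int.
Hypothesis n_gt0 : 0 < n.

Lemma gcdz_ler x : gcdz x n <= n.
Proof.
have := dvdz_gcdr x n; rewrite /gcdz dvdzE /=.
by case: n n_gt0 => // k k_gt0 /dvdn_leq; rewrite lez_nat; apply.
Qed.

Lemma gcdz_eqr x : (gcdz x n == n) = (n %| x)%Z.
Proof. by rewrite -{2}(gtz0_abs n_gt0); apply/eqP/gcdz_idPr. Qed.

Lemma max_gcdz_1pm a :
  Num.max (gcdz (1 + a) n) (gcdz (1 - a) n) = n <-> (n %| 1 - a)%Z \/ (n %| 1 + a)%Z.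
Proof.
rewrite -!gcdz_eqr; split.
- by case: leP => _ /eqP ->; [left | right].
- by case=> /eqP ->; [apply: max_r | apply: max_l]; apply: gcdz_ler.
Qed.

Lemma min_gcdz_1pm a : (n %| 1 - a)%Z \/ (n %| 1 + a)%Z ->
  Num.min (gcdz (1 + a) n) (gcdz (1 - a) n) = gcdz n 2.
Proof.
suff min_a b : (n %| 1 - b)%Z ->
    Num.min (gcdz (1 + b) n) (gcdz (1 - b) n) = gcdz n 2.
  case=> [/min_a // | n_dvd]; rewrite minC.
  by have := min_a (- a); rewrite opprK; apply.
move=> n_dvd; rewrite (eqP (etrans (gcdz_eqr _) n_dvd)) min_l ?gcdz_ler //.
have -> : 1 + b = - (1 - b) + 2 by ring.
by rewrite gcdz_dvdDl ?rpredN // gcdzC.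
Qed.

End GcdWithModulus.

Theorem mainTheorem3 (p q r s n a : int) (M : 'M[int]_2) :
  primitive p q -> primitive r s ->
  det2 p q r s = n -> 2 <= n ->
  0 <= a -> a < n ->
  inSL2 M -> M *m vec2 p q = vec2 1 0 -> M *m vec2 r s = vec2 a n ->
  let dp := vgcd (p + r) (q + s) in
  let dm := vgcd (p - r) (q - s) in
  ((Num.max dp dm = n /\ (Num.min dp dm = 1 \/ Num.min dp dm = 2)) <->
     ((a == 1 %[mod n])%Z \/ (a == -1 %[mod n])%Z)) /\
  (((a == 1 %[mod n])%Z \/ (a == -1 %[mod n])%Z) <->
     (((p == r %[mod n])%Z /\ (q == s %[mod n])%Z) \/
      ((p == - r %[mod n])%Z /\ (q == - s %[mod n])%Z))) /\
  ((Num.max dp dm = n /\ (Num.min dp dm = 1 \/ Num.min dp dm = 2)) ->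
     Num.min dp dm = gcdz n 2 /\
     (~~ (2 %| n)%Z -> Num.min dp dm = 1) /\
     ((2 %| n)%Z -> Num.min dp dm = 2)).
Proof.
move=> _ _ _ n_ge2 _ _ det_M Mu Mv dp dm.
have n_gt0 : 0 < n by apply: lt_le_trans n_ge2.
have M_unit : M \in unitmx by rewrite unitmxE det_M unitr1.
have M_sum : M *m vec2 (p + r) (q + s) = vec2 (1 + a) n.
  by rewrite vec2D mulmxDr Mu Mv -vec2D add0r.
have M_diff : M *m vec2 (p - r) (q - s) = vec2 (1 - a) (- n).
  by rewrite vec2B mulmxBr Mu Mv -vec2B sub0r.
have -> : dp = gcdz (1 + a) n by apply: gcdz_unitmx M_sum.
have -> : dm = gcdz (1 - a) n by rewrite -(gcdzN _ n); apply: gcdz_unitmx M_diff.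
have cong_plus : (n %| p - - r)%Z /\ (n %| q - - s)%Z <-> (n %| 1 + a)%Z.
  have := dvdz_vec2_unitmx n M_unit M_sum; rewrite dvdzz andbT !opprK => <-.
  by split=> [[-> ->] | /andP].
have cong_minus : (n %| p - r)%Z /\ (n %| q - s)%Z <-> (n %| 1 - a)%Z.
  have := dvdz_vec2_unitmx n M_unit M_diff; rewrite rpredN dvdzz andbT => <-.
  by split=> [[-> ->] | /andP].
rewrite !eqz_mod_dvd -[a - 1]opprB rpredN opprK (addrC a 1).
have max_iff := max_gcdz_1pm n_gt0 a.
have min_eq := @min_gcdz_1pm n n_gt0 a; rewrite gcdz2 in min_eq.
split; [split | split].
- by case=> /max_iff.
- by move=> /[dup] /max_iff -> /min_eq ->; split => //; case: ifP; [right | left].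
- by move: cong_plus cong_minus; tauto.
- by case=> /max_iff /min_eq -> _; rewrite gcdz2; case: ifP.
Qed.
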